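(* Let $\mathcal P$ be a compact set of $n\times n$ doubly stochastic matrices and let $P(1),P(2),P(3),\ldots$ be a sequence of matrices from $\mathcal P$. Suppose $j_1<j_2<\cdots$ is an infinite increasing sequence of indices such that each $P(j_r)$ is a Sarymsakov matrix and the set $\bigcup_{r\ge1}\{P(j_r)\}$ is compact. If there exists an integer $T$ such that $j_{r+1}-j_r\le T$ for all $r\ge1$, then $P(k)\cdots P(1)$ converges as $k\to\infty$ to a rank-one matrix $\mathbf 1c^T$ with $c_i\ge0$ and $\sum_i c_i=1$.
   Context: $\mathcal N=\{1,\ldots,n\}$. A matrix is stochastic if it is entrywise nonnegative with row sums $1$, and doubly stochastic if in addition its column sums are $1$. For stochastic $P$ and $\mathcal A\subseteq\mathcal N$, $F_P(\mathcal A)=\{j:\ p_{ij}>0\text{ for some } i\in\mathcal A\}$. A Sarymsakov matrix is a stochastic $P$ such that for any disjoint nonempty $\mathcal A,\tilde{\mathcal A}\subseteq\mathcal N$, either $F_P(\mathcal A)\cap F_P(\tilde{\mathcal A})\neq\emptyset$, or $F_P(\mathcal A)\cap F_P(\tilde{\mathcal A})=\emptyset$ and $|F_P(\mathcal A)\cup F_P(\tilde{\mathcal A})|>|\mathcal A\cup\tilde{\mathcal A}|$. $\mathbf 1$ is the all-ones column vector. *)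

(* real matrices as functions nat -> nat -> R, only indices < n matter. *)
From Stdlib Require Import Reals List Arith Bool.
Import ListNotations.
Open Scope R_scope.

Definition Mat := nat -> nat -> R.

Fixpoint rsum (n : nat) (f : nat -> R) : R :=
  match n with
  | O => 0
  | S m => rsum m f + f m
  end.

Definition mat_mul (n : nat) (A B : Mat) : Mat :=
  fun i j => rsum n (fun k => A i k * B k j).

Definition mat_id : Mat := fun i j => if Nat.eqb i j then 1 else 0.

Fixpoint left_prod (n : nat) (P : nat -> Mat) (k : nat) : Mat :=
  match k with
  | O => mat_id
  | S m => mat_mul n (P (S m)) (left_prod n P m)
  end.

Definition stochastic (n : nat) (A : Mat) : Prop :=
  (forall i j, (i < n)%nat -> (j < n)%nat -> 0 <= A i j) /\
  (forall i, (i < n)%nat -> rsum n (fun j => A i j) = 1).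

Definition doubly_stochastic (n : nat) (A : Mat) : Prop :=
  stochastic n A /\
  (forall j, (j < n)%nat -> rsum n (fun i => A i j) = 1).

(* subsets of {0,...,n-1} are boolean predicates on nat (values >= n ignored) *)
Definition card (n : nat) (A : nat -> bool) : nat := length (filter A (seq 0 n)).

Definition nonempty (n : nat) (A : nat -> bool) : Prop :=
  exists i, (i < n)%nat /\ A i = true.

Definition disjoint (n : nat) (A B : nat -> bool) : Prop :=
  forall i, (i < n)%nat -> ~ (A i = true /\ B i = true).

Definition posb (x : R) : bool := if Rlt_dec 0 x then true else false.

Definition F (n : nat) (P : Mat) (A : nat -> bool) : nat -> bool :=
  fun j => existsb (fun i => A i && posb (P i j)) (seq 0 n).

Definition sarymsakov (n : nat) (P : Mat) : Prop :=
  stochastic n P /\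
  forall A B : nat -> bool,
    nonempty n A -> nonempty n B -> disjoint n A B ->
    (exists j, (j < n)%nat /\ F n P A j = true /\ F n P B j = true) \/
    ((forall j, (j < n)%nat -> ~ (F n P A j = true /\ F n P B j = true)) /\
     (card n (fun j => F n P A j || F n P B j) > card n (fun i => A i || B i))%nat).

(* (sequential) compactness of a set of n x n real matrices, entrywise topology *)
Definition compact_mats (n : nat) (S : Mat -> Prop) : Prop :=
  forall s : nat -> Mat, (forall k, S (s k)) ->
  exists (phi : nat -> nat) (M : Mat),
    (forall k, (phi k < phi (Datatypes.S k))%nat) /\ S M /\
    forall i j, (i < n)%nat -> (j < n)%nat ->
      Un_cv (fun k => s (phi k) i j) (M i j).

From Stdlib Require Import Reals List Arith Bool Lra Lia Classical ClassicalDescription.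
Open Scope R_scope.

(* The limit is (1/n) 1 1^T.  Fix a column b of the products and let y_k be its
   deviation from the constant vector 1/n.  Since every P(k) is doubly stochastic,
   y_{k+1} = P(k+1) y_k and the energy |y_k|^2 drops by exactly
   sum_{i,c} P(k+1)_{ic} (y_k c - y_{k+1} i)^2, so it converges.  Along a
   subsequence on which the Sarymsakov matrices P(j_r) converge to a Sarymsakov
   matrix M, the drops vanish, so y_k c - y_k c' -> 0 whenever the columns c, c'
   meet in a positive row of M.  The Sarymsakov property forbids M to split the
   indices into two classes without such a shared row, so all entries of y_k
   merge; as they sum to 0 they tend to 0, and the limit energy is 0. *)

Lemma rsum_ext n f g :
  (forall k, (k < n)%nat -> f k = g k) -> rsum n f = rsum n g.
Proof.
  induction n as [|n IH]; simpl; intros H; auto.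
  rewrite IH by (intros; apply H; lia). rewrite H by lia. reflexivity.
Qed.

Lemma rsum_plus n f g : rsum n (fun k => f k + g k) = rsum n f + rsum n g.
Proof. induction n; simpl; [lra|]. rewrite IHn; lra. Qed.

Lemma rsum_minus n f g : rsum n (fun k => f k - g k) = rsum n f - rsum n g.
Proof. induction n; simpl; [lra|]. rewrite IHn; lra. Qed.

Lemma rsum_scal n c f : rsum n (fun k => c * f k) = c * rsum n f.
Proof. induction n; simpl; [lra|]. rewrite IHn; lra. Qed.

Lemma rsum_const n c : rsum n (fun _ => c) = INR n * c.
Proof. induction n; simpl rsum; [simpl; lra|]. rewrite IHn, S_INR; lra. Qed.

Lemma rsum_swap n m f :
  rsum n (fun i => rsum m (fun j => f i j)) = rsum m (fun j => rsum n (fun i => f i j)).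
Proof.
  induction n; simpl.
  - induction m; simpl; auto. rewrite <- IHm. lra.
  - rewrite IHn, <- rsum_plus. reflexivity.
Qed.

Lemma rsum_nonneg n f : (forall k, (k < n)%nat -> 0 <= f k) -> 0 <= rsum n f.
Proof.
  induction n; simpl; intros H; [lra|].
  assert (0 <= f n) by (apply H; lia).
  assert (0 <= rsum n f) by (apply IHn; intros; apply H; lia).
  lra.
Qed.

Lemma rsum_ge_term n f k0 :
  (forall k, (k < n)%nat -> 0 <= f k) -> (k0 < n)%nat -> f k0 <= rsum n f.
Proof.
  induction n; simpl; intros H Hk; [lia|].
  assert (0 <= f n) by (apply H; lia).
  assert (0 <= rsum n f) by (apply rsum_nonneg; intros; apply H; lia).
  destruct (Nat.eq_dec k0 n) as [->|]; [lra|].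
  assert (f k0 <= rsum n f) by (apply IHn; [intros; apply H|]; lia).
  lra.
Qed.

Lemma rsum_pos_term n f :
  rsum n f = 1 -> (forall k, (k < n)%nat -> 0 <= f k) ->
  exists k, (k < n)%nat /\ 0 < f k.
Proof.
  intros Hsum Hnn. apply NNPP; intros Hno.
  assert (Hzero : rsum n f = rsum n (fun _ => 0)).
  { apply rsum_ext. intros k Hk.
    destruct (Rle_lt_or_eq_dec _ _ (Hnn k Hk)); [exfalso; eauto | auto]. }
  rewrite rsum_const in Hzero. lra.
Qed.

Lemma rsum_delta n b :
  (b < n)%nat -> rsum n (fun a => if Nat.eqb a b then 1 else 0) = 1.
Proof.
  induction n; intros Hb; [lia|]. simpl.
  destruct (Nat.eq_dec b n) as [->|].
  - rewrite Nat.eqb_refl, (rsum_ext _ _ (fun _ => 0)), rsum_const; [lra|].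
    intros k Hk. destruct (Nat.eqb_spec k n); [lia | auto].
  - rewrite IHn by lia. destruct (Nat.eqb_spec n b); [lia | lra].
Qed.

Lemma card_le n A : (card n A <= n)%nat.
Proof.
  unfold card. induction n; [simpl; auto|].
  rewrite seq_S, filter_app, length_app. simpl. destruct (A n); simpl; lia.
Qed.

Lemma card_full n A : (forall i, (i < n)%nat -> A i = true) -> card n A = n.
Proof.
  unfold card. induction n; [simpl; auto|]. intros H.
  rewrite seq_S, filter_app, length_app, IHn by (intros; apply H; lia). simpl.
  rewrite H by lia. simpl. lia.
Qed.

Lemma posb_true x : posb x = true <-> 0 < x.
Proof. unfold posb. destruct (Rlt_dec 0 x); split; auto; discriminate. Qed.

Lemma Un_cv_const c : Un_cv (fun _ => c) c.
Proof.
  intros e He. exists O. intros. unfold R_dist. rewrite Rminus_diag, Rabs_R0. lra.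
Qed.

Lemma Un_cv_ext u v l : (forall k, u k = v k) -> Un_cv u l -> Un_cv v l.
Proof.
  intros H Hu e He. destruct (Hu e He) as [N HN].
  exists N. intros k Hk. rewrite <- H. auto.
Qed.

Lemma Un_cv_subseq u l sigma :
  (forall k, (k <= sigma k)%nat) -> Un_cv u l -> Un_cv (fun k => u (sigma k)) l.
Proof.
  intros Hs Hu e He. destruct (Hu e He) as [N HN].
  exists N. intros k Hk. apply HN. specialize (Hs k). lia.
Qed.

Lemma rsum_cv n (u : nat -> nat -> R) (l : nat -> R) :
  (forall a, (a < n)%nat -> Un_cv (fun k => u a k) (l a)) ->
  Un_cv (fun k => rsum n (fun a => u a k)) (rsum n l).
Proof.
  induction n; simpl; intros H.
  - apply Un_cv_const.
  - apply CV_plus; [apply IHn; intros |]; apply H; lia.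
Qed.

Lemma Un_cv_0_of_weighted_sq (p d e : nat -> R) m :
  Un_cv p m -> 0 < m -> (forall k, p k * d k ^ 2 <= e k) -> Un_cv e 0 -> Un_cv d 0.
Proof.
  intros Hp Hm Hbound He eps Heps.
  destruct (Hp (m / 2) ltac:(lra)) as [N1 HN1].
  assert (Hme : 0 < m / 2 * eps ^ 2) by (apply Rmult_lt_0_compat; [lra | apply pow_lt; lra]).
  destruct (He _ Hme) as [N2 HN2].
  exists (Nat.max N1 N2). intros k Hk.
  specialize (HN1 k ltac:(lia)). specialize (HN2 k ltac:(lia)).
  specialize (Hbound k).
  unfold R_dist in *. rewrite Rminus_0_r in *.
  apply Rabs_def2 in HN1. apply Rabs_def2 in HN2.
  assert (Hsq : d k ^ 2 < eps ^ 2).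
  { assert (0 <= d k ^ 2) by apply pow2_ge_0. nra. }
  unfold Rabs. destruct (Rcase_abs (d k)); nra.
Qed.

Definition hits (n : nat) (M : Mat) (S : nat -> bool) (i : nat) : bool :=
  existsb (fun j => S j && posb (M i j)) (seq 0 n).

Lemma hits_spec n M S i :
  hits n M S i = true <-> exists j, (j < n)%nat /\ S j = true /\ 0 < M i j.
Proof.
  unfold hits. rewrite existsb_exists. split.
  - intros [j [Hj HSM]]. apply in_seq in Hj. apply andb_prop in HSM.
    destruct HSM as [HS HM]. apply posb_true in HM. exists j. split; [lia | auto].
  - intros [j [Hj [HS HM]]]. exists j. split; [apply in_seq; lia|].
    rewrite HS. apply posb_true. exact HM.
Qed.

(* The rows hitting S and those hitting its complement cover everything; the
   Sarymsakov property applied to them gives a common positive column or forces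
   |F(A) u F(B)| > n, both impossible unless some row hits both sides. *)
Lemma sarymsakov_cut n M (S : nat -> bool) :
  sarymsakov n M ->
  (forall j, (j < n)%nat -> rsum n (fun i => M i j) = 1) ->
  (exists j, (j < n)%nat /\ S j = true) ->
  (exists l, (l < n)%nat /\ S l = false) ->
  exists i j l, (i < n)%nat /\ (j < n)%nat /\ (l < n)%nat /\
    S j = true /\ S l = false /\ 0 < M i j /\ 0 < M i l.
Proof.
  intros [[Hnn Hrow] Hsar] Hcol [j0 [Hj0 Sj0]] [l0 [Hl0 Sl0]].
  set (A := hits n M S). set (B := hits n M (fun j => negb (S j))).
  assert (HB : forall i, B i = true <-> exists l, (l < n)%nat /\ S l = false /\ 0 < M i l).
  { intros i. unfold B. rewrite hits_spec.
    split; intros [l [? [Hs ?]]]; exists l; destruct (S l); simpl in *; auto; discriminate. }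
  destruct (classic (exists i, (i < n)%nat /\ A i = true /\ B i = true))
    as [[i [Hi [HAi HBi]]] | Hno].
  { apply hits_spec in HAi as [j [? [? ?]]]. apply HB in HBi as [l [? [? ?]]].
    exists i, j, l. repeat split; auto. }
  exfalso.
  assert (Hdis : disjoint n A B) by (intros i Hi [? ?]; apply Hno; eauto).
  assert (HneA : nonempty n A).
  { destruct (rsum_pos_term n (fun i => M i j0)) as [i [Hi Hp]]; auto.
    exists i. split; auto. apply hits_spec. eauto. }
  assert (HneB : nonempty n B).
  { destruct (rsum_pos_term n (fun i => M i l0)) as [i [Hi Hp]]; auto.
    exists i. split; auto. apply HB. eauto. }
  destruct (Hsar A B HneA HneB Hdis) as [[c [Hc [FA FB]]] | [_ Hcard]].
  - (* [F n M] is [hits] for the transpose of [M]. *)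
    apply (hits_spec n (fun j i => M i j)) in FA as [i1 [Hi1 [HA1 P1]]].
    apply (hits_spec n (fun j i => M i j)) in FB as [i2 [Hi2 [HB2 P2]]].
    destruct (S c) eqn:Sc.
    + apply (Hdis i2 Hi2). split; auto. apply hits_spec. eauto.
    + apply (Hdis i1 Hi1). split; auto. apply HB. eauto.
  - rewrite (card_full n (fun i => A i || B i)) in Hcard.
    + pose proof (card_le n (fun j => F n M A j || F n M B j)). lia.
    + intros i Hi. destruct (rsum_pos_term n (fun l => M i l)) as [l [Hl Hp]];
        [apply Hrow; auto | intros; apply Hnn; auto |].
      destruct (S l) eqn:Sl.
      * apply orb_true_intro. left. apply hits_spec. eauto.
      * apply orb_true_intro. right. apply HB. eauto.
Qed.

(* Closing the relation "z_k c - z_k c' -> 0" under shared positive rows of M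
   yields an equivalence class that [sarymsakov_cut] cannot separate. *)
Lemma sarymsakov_consensus n M (z : nat -> nat -> R) :
  sarymsakov n M ->
  (forall j, (j < n)%nat -> rsum n (fun i => M i j) = 1) ->
  (forall i c c', (i < n)%nat -> (c < n)%nat -> (c' < n)%nat ->
     0 < M i c -> 0 < M i c' -> Un_cv (fun k => z k c - z k c') 0) ->
  forall c c', (c < n)%nat -> (c' < n)%nat -> Un_cv (fun k => z k c - z k c') 0.
Proof.
  intros HM Hcol Hrow c c' Hc Hc'.
  set (merged := fun d => Un_cv (fun k => z k d - z k c') 0).
  set (S := fun d => if excluded_middle_informative (merged d) then true else false).
  assert (HS : forall d, S d = true <-> merged d).
  { intros d. unfold S. destruct (excluded_middle_informative (merged d)); split;
      auto; discriminate. }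
  apply HS, NNPP. intros Hnc.
  destruct (sarymsakov_cut n M S HM Hcol) as (i & d & l & Hi & Hd & Hl & Sd & Sl & Pd & Pl).
  - exists c'. split; auto. apply HS.
    apply (Un_cv_ext (fun _ => 0)); [intros; ring | apply Un_cv_const].
  - exists c. split; auto. apply not_true_is_false. exact Hnc.
  - assert (Hmd : merged d) by (apply HS; auto).
    assert (Hml : ~ merged l) by (intros H%HS; congruence).
    apply Hml. unfold merged. replace 0 with (0 - 0) by ring.
    apply (Un_cv_ext (fun k => (z k d - z k c') - (z k d - z k l))); [intros; ring|].
    apply CV_minus; auto. apply (Hrow i); auto.
Qed.

Lemma Un_cv_0_of_consensus_sum_0 n (z : nat -> nat -> R) :
  (forall k, rsum n (z k) = 0) ->
  (forall c c', (c < n)%nat -> (c' < n)%nat -> Un_cv (fun k => z k c - z k c') 0) ->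
  forall c, (c < n)%nat -> Un_cv (fun k => z k c) 0.
Proof.
  intros Hsum Hcons c Hc.
  assert (HnR : 0 < INR n) by (apply lt_0_INR; lia).
  apply (Un_cv_ext (fun k => / INR n * rsum n (fun l => z k c - z k l))).
  { intros k. rewrite rsum_minus, rsum_const, Hsum. field. lra. }
  replace 0 with (/ INR n * rsum n (fun _ => 0)) by (rewrite rsum_const; ring).
  apply CV_mult; [apply Un_cv_const|].
  apply (rsum_cv n (fun l k => z k c - z k l)). auto.
Qed.

Lemma doubly_stochastic_energy n W v :
  doubly_stochastic n W ->
  rsum n (fun a => (rsum n (fun c => W a c * v c)) ^ 2) +
  rsum n (fun i => rsum n (fun c => W i c * (v c - rsum n (fun c => W i c * v c)) ^ 2))
  = rsum n (fun c => v c ^ 2).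
Proof.
  intros [[_ Hrow] Hcol].
  set (m := fun i => rsum n (fun c => W i c * v c)).
  change (rsum n (fun a => m a ^ 2) +
          rsum n (fun i => rsum n (fun c => W i c * (v c - m i) ^ 2)) =
          rsum n (fun c => v c ^ 2)).
  rewrite (rsum_ext n (fun i => rsum n (fun c => W i c * (v c - m i) ^ 2))
             (fun i => rsum n (fun c => W i c * v c ^ 2) - m i ^ 2)).
  - rewrite rsum_minus, rsum_swap.
    rewrite (rsum_ext n (fun c => rsum n (fun i => W i c * v c ^ 2)) (fun c => v c ^ 2)).
    + lra.
    + intros c Hc. rewrite (rsum_ext n _ (fun i => v c ^ 2 * W i c)) by (intros; ring).
      rewrite rsum_scal, Hcol by auto. ring.
  - intros i Hi.
    rewrite (rsum_ext n _ (fun c => (W i c * v c ^ 2 + (-2 * m i) * (W i c * v c))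
                                    + m i ^ 2 * W i c)) by (intros; ring).
    rewrite !rsum_plus, !rsum_scal, Hrow by auto. fold (m i). ring.
Qed.

Section LeftProductColumn.

Variables (n : nat) (P : nat -> Mat) (b : nat).
Hypothesis n_pos : (1 <= n)%nat.
Hypothesis b_lt : (b < n)%nat.
Hypothesis P_ds : forall k, (1 <= k)%nat -> doubly_stochastic n (P k).

Definition dev (k a : nat) : R := left_prod n P k a b - / INR n.

Definition energy (k : nat) : R := rsum n (fun a => dev k a ^ 2).

Lemma left_prod_col_sum k : rsum n (fun a => left_prod n P k a b) = 1.
Proof.
  induction k as [|k IH]; simpl.
  - apply rsum_delta, b_lt.
  - unfold mat_mul. rewrite rsum_swap, <- IH. apply rsum_ext. intros c Hc.
    rewrite (rsum_ext n _ (fun i => left_prod n P k c b * P (S k) i c)) by (intros; ring).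
    destruct (P_ds (S k)) as [_ Hcol]; [lia|].
    rewrite rsum_scal, Hcol by auto. ring.
Qed.

Lemma dev_sum k : rsum n (dev k) = 0.
Proof.
  unfold dev. rewrite rsum_minus, rsum_const, left_prod_col_sum.
  assert (0 < INR n) by (apply lt_0_INR; lia). field. lra.
Qed.

Lemma dev_step k a : (a < n)%nat -> dev (S k) a = rsum n (fun c => P (S k) a c * dev k c).
Proof.
  intros Ha. unfold dev. simpl. unfold mat_mul.
  rewrite (rsum_ext n (fun c => P (S k) a c * (left_prod n P k c b - / INR n))
             (fun c => P (S k) a c * left_prod n P k c b - / INR n * P (S k) a c))
    by (intros; ring).
  destruct (P_ds (S k)) as [[_ Hrow] _]; [lia|].
  rewrite rsum_minus, rsum_scal, Hrow by auto. ring.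
Qed.

Definition dissipation (k : nat) : R :=
  rsum n (fun i => rsum n (fun c => P (S k) i c * (dev k c - dev (S k) i) ^ 2)).

Lemma energy_step k : energy (S k) + dissipation k = energy k.
Proof.
  unfold energy, dissipation.
  rewrite <- (doubly_stochastic_energy n (P (S k)) (dev k)) by (apply P_ds; lia).
  f_equal.
  - apply rsum_ext. intros a Ha. rewrite dev_step; auto.
  - apply rsum_ext. intros i Hi. apply rsum_ext. intros c Hc. rewrite dev_step; auto.
Qed.

Lemma dissipation_term_nonneg k i c : (i < n)%nat -> (c < n)%nat ->
  0 <= P (S k) i c * (dev k c - dev (S k) i) ^ 2.
Proof.
  intros Hi Hc. destruct (P_ds (S k)) as [[Hnn _] _]; [lia|].
  apply Rmult_le_pos; [apply Hnn; auto | apply pow2_ge_0].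
Qed.

Lemma energy_drop_ge k i c : (i < n)%nat -> (c < n)%nat ->
  P (S k) i c * (dev k c - dev (S k) i) ^ 2 <= energy k - energy (S k).
Proof.
  intros Hi Hc. rewrite <- (energy_step k).
  replace (energy (S k) + dissipation k - energy (S k)) with (dissipation k) by ring.
  eapply Rle_trans.
  - apply (rsum_ge_term n (fun c' => P (S k) i c' * (dev k c' - dev (S k) i) ^ 2) c); auto.
    intros; apply dissipation_term_nonneg; auto.
  - apply (rsum_ge_term n
      (fun i' => rsum n (fun c' => P (S k) i' c' * (dev k c' - dev (S k) i') ^ 2)) i); auto.
    intros; apply rsum_nonneg; intros; apply dissipation_term_nonneg; auto.
Qed.

Lemma energy_decreasing : Un_decreasing energy.
Proof.
  intros k. pose proof (energy_step k).
  assert (0 <= dissipation k).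
  { apply rsum_nonneg; intros; apply rsum_nonneg; intros; apply dissipation_term_nonneg; auto. }
  lra.
Qed.

Lemma energy_has_lb : has_lb energy.
Proof.
  exists 0. intros v [k ->]. unfold opp_seq.
  assert (0 <= energy k) by (apply rsum_nonneg; intros; apply pow2_ge_0).
  lra.
Qed.

Variable j : nat -> nat.
Hypothesis j_1 : (1 <= j 1)%nat.
Hypothesis j_incr : forall r, (1 <= r)%nat -> (j r < j (S r))%nat.
Hypothesis P_j_sarymsakov : forall r, (1 <= r)%nat -> sarymsakov n (P (j r)).
Hypothesis P_j_compact : compact_mats n (fun M => exists r, (1 <= r)%nat /\ M = P (j r)).

Lemma le_j r : (1 <= r)%nat -> (r <= j r)%nat.
Proof.
  induction r as [|r IH]; intros Hr; [lia|].
  destruct (Nat.eq_dec r 0) as [->|]; [lia|].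
  pose proof (j_incr r ltac:(lia)). pose proof (IH ltac:(lia)). lia.
Qed.

Lemma sarymsakov_subseq_limit :
  exists (t : nat -> nat) (M : Mat),
    (forall k, (k <= t k)%nat) /\ sarymsakov n M /\
    (forall c, (c < n)%nat -> rsum n (fun i => M i c) = 1) /\
    (forall i c, (i < n)%nat -> (c < n)%nat -> Un_cv (fun k => P (S (t k)) i c) (M i c)).
Proof.
  destruct (P_j_compact (fun k => P (j (S k)))) as (phi & M & Hphi & [r0 [Hr0 ->]] & Hcv).
  { intros k. exists (S k). split; [lia | auto]. }
  assert (Hphi_ge : forall k, (k <= phi k)%nat).
  { induction k; [lia|]. pose proof (Hphi k). lia. }
  assert (Hj : forall k, S (j (S (phi k)) - 1) = j (S (phi k))).
  { intros k. pose proof (le_j (S (phi k)) ltac:(lia)). lia. }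
  exists (fun k => (j (S (phi k)) - 1)%nat), (P (j r0)). split; [|split; [|split]].
  - intros k. pose proof (Hj k). pose proof (le_j (S (phi k)) ltac:(lia)).
    pose proof (Hphi_ge k). lia.
  - apply P_j_sarymsakov, Hr0.
  - apply P_ds. pose proof (le_j r0 Hr0). lia.
  - intros i c Hi Hc. apply (Un_cv_ext (fun k => P (j (S (phi k))) i c)).
    + intros k. rewrite Hj. reflexivity.
    + apply Hcv; auto.
Qed.

Lemma energy_cv_0 : Un_cv energy 0.
Proof.
  destruct (decreasing_cv energy energy_decreasing energy_has_lb) as [L HL].
  destruct sarymsakov_subseq_limit as (t & M & Ht & HM & HMcol & HPM).
  assert (Hdrop : Un_cv (fun k => energy (t k) - energy (S (t k))) 0).
  { replace 0 with (L - L) by ring.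
    apply CV_minus; apply Un_cv_subseq; auto. }
  assert (Hedge : forall i c, (i < n)%nat -> (c < n)%nat -> 0 < M i c ->
            Un_cv (fun k => dev (t k) c - dev (S (t k)) i) 0).
  { intros i c Hi Hc HMic.
    apply (Un_cv_0_of_weighted_sq (fun k => P (S (t k)) i c) _
             (fun k => energy (t k) - energy (S (t k))) (M i c) (HPM i c Hi Hc)); auto.
    intros k. apply energy_drop_ge; auto. }
  assert (Hdev : forall c, (c < n)%nat -> Un_cv (fun k => dev (t k) c) 0).
  { apply Un_cv_0_of_consensus_sum_0; auto.
    - intros k. apply dev_sum.
    - apply (sarymsakov_consensus n M); auto.
      intros i c c' Hi Hc Hc' Pc Pc'. replace 0 with (0 - 0) by ring.
      apply (Un_cv_ext (fun k => (dev (t k) c - dev (S (t k)) i) -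
                                 (dev (t k) c' - dev (S (t k)) i))); [intros; ring|].
      apply CV_minus; auto. }
  assert (Henergy_t : Un_cv (fun k => energy (t k)) 0).
  { replace 0 with (rsum n (fun _ => 0 * 0)) by (rewrite rsum_const; ring).
    apply (rsum_cv n (fun a k => dev (t k) a ^ 2)). intros a Ha.
    apply (Un_cv_ext (fun k => dev (t k) a * dev (t k) a)); [intros; ring|].
    apply CV_mult; auto. }
  replace 0 with L; [exact HL|].
  apply (UL_sequence (fun k => energy (t k))); [apply Un_cv_subseq|]; auto.
Qed.

Lemma dev_cv_0 a : (a < n)%nat -> Un_cv (fun k => dev k a) 0.
Proof.
  intros Ha.
  apply (Un_cv_0_of_weighted_sq (fun _ => 1) _ energy 1 (Un_cv_const 1)); [lra | | apply energy_cv_0].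
  intros k. rewrite Rmult_1_l.
  apply (rsum_ge_term n (fun a => dev k a ^ 2)); auto. intros; apply pow2_ge_0.
Qed.

Lemma left_prod_cv a : (a < n)%nat -> Un_cv (fun k => left_prod n P k a b) (/ INR n).
Proof.
  intros Ha. replace (/ INR n) with (0 + / INR n) by ring.
  apply (Un_cv_ext (fun k => dev k a + / INR n)); [intros; unfold dev; ring|].
  apply CV_plus; [apply dev_cv_0, Ha | apply Un_cv_const].
Qed.

End LeftProductColumn.

Theorem corollary2 (n : nat) (Pset : Mat -> Prop) (P : nat -> Mat)
  (j : nat -> nat) (T : nat) :
  (1 <= n)%nat ->
  compact_mats n Pset ->
  (forall M, Pset M -> doubly_stochastic n M) ->
  (forall k, (1 <= k)%nat -> Pset (P k)) ->
  (1 <= j 1)%nat ->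
  (forall r, (1 <= r)%nat -> (j r < j (S r))%nat) ->
  (forall r, (1 <= r)%nat -> sarymsakov n (P (j r))) ->
  compact_mats n (fun M => exists r, (1 <= r)%nat /\ M = P (j r)) ->
  (forall r, (1 <= r)%nat -> (j (S r) - j r <= T)%nat) ->
  exists c : nat -> R,
    (forall i, (i < n)%nat -> 0 <= c i) /\
    rsum n c = 1 /\
    forall a b, (a < n)%nat -> (b < n)%nat ->
      Un_cv (fun k => left_prod n P k a b) (c b).
Proof.
  intros Hn _ HPset HP Hj1 Hjinc Hsar Hcomp _.
  assert (HnR : 0 < INR n) by (apply lt_0_INR; lia).
  exists (fun _ => / INR n). split; [|split].
  - intros; left; apply Rinv_0_lt_compat, HnR.
  - rewrite rsum_const. field. lra.
  - intros a b Ha Hb.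
    apply (left_prod_cv n P b Hn Hb (fun k Hk => HPset _ (HP k Hk)) j); auto.
Qed.
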